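(* Let $(E,\rho)$ be a complete partial $v$-generalized metric space and let $S:E\to E$ satisfy $\rho(Su,Sw)\le\lambda\max\{\rho(u,w),\rho(u,Su),\rho(w,Sw)\}$ for all $u,w\in E$, where $\lambda\in[0,1)$. Then $S$ has a unique fixed point $b\in E$, and $\rho(b,b)=0$.
   Context: Let $E$ be a nonempty set and $v\in\mathbb{N}$. $(E,\rho)$, with $\rho:E\times E\to[0,\infty)$, is a partial $v$-generalized metric space if for all $u,w,z_1,\dots,z_v\in E$: (1) $u=w$ iff $\rho(u,u)=\rho(u,w)=\rho(w,w)$; (2) $\rho(u,u)\le\rho(u,w)$; (3) $\rho(u,w)=\rho(w,u)$; (4) $\rho(u,w)\le\rho(u,z_1)+\rho(z_1,z_2)+\dots+\rho(z_{v-1},z_v)+\rho(z_v,w)-\sum_{i=1}^v\rho(z_i,z_i)$. A sequence $\{u_n\}$ in $E$ converges to $u\in E$ if $\lim_{n\to\infty}\rho(u_n,u)=\rho(u,u)$; it is Cauchy if $\lim_{n,m\to\infty}\rho(u_n,u_m)$ exists and is finite. $(E,\rho)$ is complete if for every Cauchy sequence $\{u_n\}$ there is $u\in E$ with $\lim_{n,m\to\infty}\rho(u_n,u_m)=\lim_{n\to\infty}\rho(u_n,u)=\rho(u,u)$. *)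

From Stdlib Require Import Reals.
Open Scope R_scope.

(* Chain sum for points z 1, ..., z v (v >= 1):
   rho(u,z1) + rho(z1,z2) + ... + rho(z_{v-1},z_v) + rho(z_v,w) - sum_{i=1}^v rho(z_i,z_i).
   sum_f s n f = f s + ... + f n. *)
Definition chain_sum' {E : Type} (rho : E -> E -> R) (v : nat) (z : nat -> E) (u w : E) : R :=
  rho u (z 1%nat)
  + (match v with
     | O | S O => 0
     | _ => sum_f 1 (v - 1) (fun i => rho (z i) (z (S i)))
     end)
  + rho (z v) w
  - sum_f 1 v (fun i => rho (z i) (z i)).

Definition partial_v_gen_metric {E : Type} (v : nat) (rho : E -> E -> R) : Prop :=
  (forall u w, 0 <= rho u w) /\
  (forall u w, u = w <-> (rho u u = rho u w /\ rho u w = rho w w)) /\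
  (forall u w, rho u u <= rho u w) /\
  (forall u w, rho u w = rho w u) /\
  (forall (u w : E) (z : nat -> E), rho u w <= chain_sum' rho v z u w).

Definition seq_lim (a : nat -> R) (L : R) : Prop :=
  forall eps, eps > 0 -> exists N, forall n, (N <= n)%nat -> Rabs (a n - L) < eps.

Definition dseq_lim (a : nat -> nat -> R) (L : R) : Prop :=
  forall eps, eps > 0 -> exists N, forall n m, (N <= n)%nat -> (N <= m)%nat ->
    Rabs (a n m - L) < eps.

Definition pv_converges {E : Type} (rho : E -> E -> R) (x : nat -> E) (u : E) : Prop :=
  seq_lim (fun n => rho (x n) u) (rho u u).

Definition pv_cauchy {E : Type} (rho : E -> E -> R) (x : nat -> E) : Prop :=
  exists L, dseq_lim (fun n m => rho (x n) (x m)) L.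

Definition pv_complete {E : Type} (rho : E -> E -> R) : Prop :=
  forall x : nat -> E, pv_cauchy rho x ->
    exists u : E,
      dseq_lim (fun n m => rho (x n) (x m)) (rho u u) /\
      seq_lim (fun n => rho (x n) u) (rho u u).

(* The Picard iterates x_n = S^n x_0 satisfy rho(x_{n+1}, x_{n+2}) <= lambda rho(x_n, x_{n+1}),
   because b <= lambda max(a, b) with lambda < 1 forces b <= lambda a.
   Taking the constant chain z_i = a in the v-chain inequality yields the triangle inequality
   rho(u, w) <= rho(u, a) + rho(a, w) - rho(a, a), so rho(x_n, x_m) <= lambda^n rho(x_0, x_1)/(1 - lambda)
   and the orbit is Cauchy with double limit 0. Completeness yields b with rho(b, b) = 0 and
   rho(x_n, b) -> 0; then rho(b, Sb) <= rho(b, x_{n+1}) + rho(S x_n, S b) tends to at most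
   lambda rho(b, Sb), so rho(b, Sb) = 0 = rho(b, b) and, by rho(Sb, Sb) <= rho(Sb, b), S b = b.
   A fixed point c has rho(c, c) <= lambda rho(c, c), and two fixed points satisfy
   rho(c, b) <= lambda rho(c, b); so both distances vanish, which gives uniqueness. *)

From Stdlib Require Import Reals Lra Lia.
Open Scope R_scope.

Lemma le_mult_lt1_eq0 (l a : R) : 0 <= a -> l < 1 -> a <= l * a -> a = 0.
Proof. intros Ha Hl Hle. nra. Qed.

Lemma le_mult_Rmax_lt1 (l a b : R) :
  0 <= l < 1 -> 0 <= a -> b <= l * Rmax a b -> b <= l * a.
Proof.
  intros Hl Ha. unfold Rmax. destruct Rle_dec as [Hab|Hab]; intros Hb; [|lra].
  assert (b = 0) by (apply (le_mult_lt1_eq0 l); lra).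
  subst b. apply Rmult_le_pos; lra.
Qed.

Lemma sum_f_const (n : nat) (c : R) : (1 <= n)%nat -> sum_f 1 n (fun _ => c) = INR n * c.
Proof.
  intros Hn. unfold sum_f. rewrite sum_cte. replace (S (n - 1)) with n by lia. ring.
Qed.

Lemma geometric_eventually_lt (c lambda eps : R) :
  0 <= c -> 0 <= lambda < 1 -> 0 < eps ->
  exists N, forall n, (N <= n)%nat -> c * lambda ^ n < eps.
Proof.
  intros Hc Hl Heps.
  assert (Hpos : 0 < eps / (c + 1)) by (apply Rdiv_lt_0_compat; lra).
  destruct (pow_lt_1_zero lambda ltac:(rewrite Rabs_right; lra) _ Hpos) as [N HN].
  exists N. intros n Hn. specialize (HN n Hn).
  rewrite Rabs_right in HN by (apply Rle_ge, pow_le; lra).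
  apply Rmult_lt_compat_l with (r := c + 1) in HN; [|lra].
  replace ((c + 1) * (eps / (c + 1))) with eps in HN by (field; lra).
  pose proof (pow_le lambda n ltac:(lra)). nra.
Qed.

Lemma dseq_lim_unique (a : nat -> nat -> R) (L1 L2 : R) :
  dseq_lim a L1 -> dseq_lim a L2 -> L1 = L2.
Proof.
  intros H1 H2. apply Rle_antisym; apply le_epsilon; intros eps Heps;
    destruct (H1 (eps / 2) ltac:(lra)) as [N1 HN1];
    destruct (H2 (eps / 2) ltac:(lra)) as [N2 HN2];
    specialize (HN1 (N1 + N2)%nat (N1 + N2)%nat ltac:(lia) ltac:(lia));
    specialize (HN2 (N1 + N2)%nat (N1 + N2)%nat ltac:(lia) ltac:(lia));
    apply Rabs_def2 in HN1; apply Rabs_def2 in HN2; lra.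
Qed.

Section PartialMetric.

Context {E : Type} {v : nat} {rho : E -> E -> R}.
Hypothesis Hm : partial_v_gen_metric v rho.

Lemma pvm_nonneg u w : 0 <= rho u w.
Proof. apply Hm. Qed.

Lemma pvm_self_le u w : rho u u <= rho u w.
Proof. apply Hm. Qed.

Lemma pvm_sym u w : rho u w = rho w u.
Proof. apply Hm. Qed.

Lemma pvm_eq u w : rho u u = rho u w -> rho u w = rho w w -> u = w.
Proof. intros H1 H2. apply Hm. auto. Qed.

Hypothesis Hv : (1 <= v)%nat.

Lemma pvm_triangle u a w : rho u w <= rho u a + rho a w - rho a a.
Proof.
  destruct Hm as (_ & _ & _ & _ & Hchain).
  specialize (Hchain u w (fun _ => a)). unfold chain_sum' in Hchain.
  destruct v as [|[|v']]; [lia| |].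
  - unfold sum_f in Hchain. simpl in Hchain. lra.
  - rewrite !sum_f_const in Hchain by lia.
    replace (S (S v') - 1)%nat with (S v') in Hchain by lia.
    rewrite (S_INR (S v')) in Hchain. lra.
Qed.

Section GeometricSequence.

Variables (x : nat -> E) (c lambda : R).
Hypothesis Hlambda : 0 <= lambda < 1.
Hypothesis Hstep : forall n, rho (x n) (x (S n)) <= c * lambda ^ n.

Lemma geometric_constant_nonneg : 0 <= c / (1 - lambda).
Proof.
  pose proof (Hstep 0) as H0. pose proof (pvm_nonneg (x 0%nat) (x 1%nat)).
  simpl in H0. apply Rle_mult_inv_pos; lra.
Qed.

Lemma geometric_dist_succ_le n k :
  rho (x n) (x (n + S k)) <= c / (1 - lambda) * (lambda ^ n - lambda ^ (n + S k)).
Proof.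
  induction k as [|k IH].
  - rewrite Nat.add_1_r, <- tech_pow_Rmult.
    replace (c / (1 - lambda) * (lambda ^ n - lambda * lambda ^ n)) with (c * lambda ^ n)
      by (field; lra).
    apply Hstep.
  - pose proof (pvm_triangle (x n) (x (n + S k)) (x (n + S (S k)))) as Htri.
    pose proof (pvm_nonneg (x (n + S k)) (x (n + S k))) as Hself.
    replace (n + S (S k))%nat with (S (n + S k)) in * by lia.
    pose proof (Hstep (n + S k)) as Hnext.
    replace (c / (1 - lambda) * (lambda ^ n - lambda ^ S (n + S k)))
      with (c / (1 - lambda) * (lambda ^ n - lambda ^ (n + S k)) + c * lambda ^ (n + S k))
      by (simpl; field; lra).
    lra.
Qed.

Lemma geometric_dist_le n m :
  (n <= m)%nat -> rho (x n) (x m) <= c / (1 - lambda) * lambda ^ n.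
Proof.
  intros Hnm.
  pose proof geometric_constant_nonneg as HK.
  set (K := c / (1 - lambda)) in *.
  pose proof (pow_le lambda n ltac:(lra)) as Hpow.
  destruct (Nat.eq_dec n m) as [<-|Hne].
  - assert (Hc : c <= K).
    { replace c with (K * (1 - lambda)) by (unfold K; field; lra). nra. }
    pose proof (pvm_self_le (x n) (x (S n))). pose proof (Hstep n).
    pose proof (Rmult_le_compat_r _ _ _ Hpow Hc). lra.
  - replace m with (n + S (m - n - 1))%nat by lia.
    pose proof (geometric_dist_succ_le n (m - n - 1)) as Hdist. fold K in Hdist.
    pose proof (pow_le lambda (n + S (m - n - 1)) ltac:(lra)).
    nra.
Qed.

Lemma geometric_dseq_lim0 : dseq_lim (fun n m => rho (x n) (x m)) 0.
Proof.
  intros eps Heps.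
  destruct (geometric_eventually_lt _ _ _ geometric_constant_nonneg Hlambda Heps) as [N HN].
  exists N. intros n m HnN HmN. rewrite Rminus_0_r, Rabs_right by (apply Rle_ge, pvm_nonneg).
  destruct (Nat.le_ge_cases n m) as [Hle|Hle].
  - pose proof (geometric_dist_le n m Hle). pose proof (HN n HnN). lra.
  - rewrite pvm_sym. pose proof (geometric_dist_le m n Hle). pose proof (HN m HmN). lra.
Qed.

End GeometricSequence.

Section Contraction.

Context {f : E -> E} {lambda : R}.
Hypothesis Hlambda : 0 <= lambda < 1.
Hypothesis Hcontr :
  forall u w, rho (f u) (f w) <= lambda * Rmax (rho u w) (Rmax (rho u (f u)) (rho w (f w))).

Lemma contraction_fixpoint_self_zero b : f b = b -> rho b b = 0.
Proof.
  intros Hb. pose proof (Hcontr b b) as H.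
  rewrite Hb, (Rmax_left (rho b b) (rho b b)), Rmax_left in H by lra.
  apply (le_mult_lt1_eq0 lambda); auto using pvm_nonneg; lra.
Qed.

Lemma contraction_fixpoint_unique b c : f b = b -> f c = c -> c = b.
Proof.
  intros Hb Hc.
  pose proof (contraction_fixpoint_self_zero b Hb) as Hbb.
  pose proof (contraction_fixpoint_self_zero c Hc) as Hcc.
  pose proof (Hcontr c b) as H. rewrite Hb, Hc, Hbb, Hcc, (Rmax_left 0 0), Rmax_left in H
    by (auto using pvm_nonneg; lra).
  assert (Hcb : rho c b = 0) by (apply (le_mult_lt1_eq0 lambda); auto using pvm_nonneg; lra).
  apply pvm_eq; lra.
Qed.

Lemma contraction_orbit_step u : rho (f u) (f (f u)) <= lambda * rho u (f u).
Proof.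
  pose proof (Hcontr u (f u)) as H.
  rewrite Rmax_assoc, (Rmax_left (rho u (f u)) (rho u (f u))) in H by lra.
  apply le_mult_Rmax_lt1 in H; auto using pvm_nonneg.
Qed.

Lemma contraction_orbit_geometric x0 n :
  rho (Nat.iter n f x0) (Nat.iter (S n) f x0) <= rho x0 (f x0) * lambda ^ n.
Proof.
  induction n as [|n IH]; simpl.
  - lra.
  - pose proof (contraction_orbit_step (Nat.iter n f x0)). simpl in IH. nra.
Qed.

Lemma contraction_limit_fixpoint (x : nat -> E) (b : E) :
  (forall n, x (S n) = f (x n)) ->
  dseq_lim (fun n m => rho (x n) (x m)) 0 ->
  seq_lim (fun n => rho (x n) b) 0 ->
  rho b b = 0 ->
  f b = b.
Proof.
  intros Hx Hcauchy Hlim Hbb.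
  set (t := rho b (f b)).
  assert (Ht_nonneg : 0 <= t) by apply pvm_nonneg.
  assert (Ht : (1 - lambda) * t <= 0).
  { apply le_epsilon. intros eps Heps.
    set (e := eps / 2).
    assert (He : e > 0) by (unfold e; lra).
    destruct (Hlim e He) as [N1 HN1].
    destruct (Hcauchy e He) as [N2 HN2].
    set (n := (N1 + N2)%nat).
    pose proof (HN1 n ltac:(unfold n; lia)) as A1.
    pose proof (HN1 (S n) ltac:(unfold n; lia)) as A2.
    pose proof (HN2 n (S n) ltac:(unfold n; lia) ltac:(unfold n; lia)) as A3.
    cbv beta in A1, A2, A3. rewrite Rminus_0_r in A1, A2, A3.
    rewrite Rabs_right in A1, A2, A3 by (apply Rle_ge, pvm_nonneg).
    pose proof (pvm_triangle b (x (S n)) (f b)) as Htri.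
    pose proof (pvm_nonneg (x (S n)) (x (S n))).
    assert (Hmax : Rmax (rho (x n) b) (Rmax (rho (x n) (x (S n))) t) <= e + t).
    { repeat apply Rmax_lub; lra. }
    pose proof (Hcontr (x n) b) as Hs. rewrite <- Hx in Hs. fold t in Hs.
    rewrite (pvm_sym b (x (S n))) in Htri. fold t in Htri.
    (* t <= rho(b, x_{n+1}) + rho(f x_n, f b) <= e + lambda (e + t) *)
    unfold e in *. nra. }
  assert (Ht0 : t = 0) by nra.
  pose proof (pvm_self_le (f b) b) as Hself. rewrite (pvm_sym (f b) b) in Hself. fold t in Hself.
  pose proof (pvm_nonneg (f b) (f b)).
  symmetry. apply pvm_eq; fold t; lra.
Qed.

End Contraction.

End PartialMetric.

Theorem mainTheorem7 (E : Type) (v : nat) (rho : E -> E -> R) (S : E -> E) (lambda : R) :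
  (1 <= v)%nat ->
  inhabited E ->
  partial_v_gen_metric v rho ->
  pv_complete rho ->
  0 <= lambda < 1 ->
  (forall u w, rho (S u) (S w) <= lambda * Rmax (rho u w) (Rmax (rho u (S u)) (rho w (S w)))) ->
  exists b : E, S b = b /\ rho b b = 0 /\ (forall c : E, S c = c -> c = b).
Proof.
  intros Hv [x0] Hm Hcomplete Hlambda Hcontr.
  set (x := fun n => Nat.iter n S x0).
  assert (Hcauchy : dseq_lim (fun n m => rho (x n) (x m)) 0).
  { exact (geometric_dseq_lim0 Hm Hv x _ lambda Hlambda
             (contraction_orbit_geometric Hm Hlambda Hcontr x0)). }
  destruct (Hcomplete x (ex_intro _ 0 Hcauchy)) as [b [Hdlim Hlim]].
  assert (Hbb : rho b b = 0) by exact (eq_sym (dseq_lim_unique _ _ _ Hcauchy Hdlim)).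
  rewrite Hbb in Hlim.
  pose proof (contraction_limit_fixpoint Hm Hv Hlambda Hcontr x b (fun n => eq_refl)
                Hcauchy Hlim Hbb) as Hfix.
  exists b. split; [exact Hfix|split; [exact Hbb|]].
  intros c Hc. exact (contraction_fixpoint_unique Hm Hlambda Hcontr b c Hfix Hc).
Qed.
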